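(* Let $Z$ be a compact Hausdorff space containing (as a subspace) a homeomorphic copy of the one-point compactification of an uncountable discrete space, and let $n\in\mathbb{Z}_{>0}$. Then for every $d$ with $2\le d\le n$, the subspace $$Z_{(d)}:=\{\mathbf z\subseteq Z:\ |\mathbf z|=d\}\subseteq Z_{[n]}$$ (the stratum of $Z_{[n]}$ consisting of the points whose fiber under $\pi:Z_{[n]}^{\subseteq}\to Z_{[n]}$ has exactly $d$ elements) is not a normal topological space.
   Context: $Z_{[n]}:=\{\mathbf z\subseteq Z:\ 1\le|\mathbf z|\le n\}$ carries the quotient topology from $Z^n$ via $(z_i)_i\mapsto\{z_i\}_i$ (equivalently the Vietoris topology); $Z_{[n]}^{\subseteq}:=\{(z,x)\in Z\times Z_{[n]}: z\in x\}$ and $\pi$ is the second projection. A space is normal if any two disjoint closed subsets have disjoint open neighborhoods. *)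

From HB Require Import structures.
From mathcomp Require Import all_boot all_order all_algebra.
From mathcomp Require Import all_classical all_reals all_analysis.
Set Implicit Arguments. Unset Strict Implicit. Unset Printing Implicit Defensive.
Import Order.TTheory GRing.Theory Num.Theory.
Local Open Scope classical_set_scope.
Local Open Scope card_scope.

Definition embedding {X Y : topologicalType} (f : X -> Y) : Prop :=
  [/\ injective f, continuous f &
      forall U : set X, open U -> exists V : set Y, open V /\ f @` U = V `&` range f].

(* Z_[n] = { z subset of Z : 1 <= |z| <= n } *)
Definition Zbr (Z : Type) (n : nat) : set (set Z) :=
  [set A | A !=set0 /\ A #<= `I_n].
Arguments Zbr : clear implicits.

(* The quotient map Z^n -> Z_[n], (z_i)_i |-> {z_i}_i. *)
Definition symq (Z : Type) (n : nat) (f : 'I_n -> Z) : set Z := range f.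

(* Open subsets of Z_[n] for the quotient topology from Z^n (product topology). *)
Definition Zbr_open (Z : topologicalType) (n : nat) (W : set (set Z)) : Prop :=
  W `<=` Zbr Z n /\ @open {ptws 'I_n -> Z} (@symq Z n @^-1` W).

Definition Zstr (Z : Type) (d : nat) : set (set Z) := [set A | A #= `I_d].
Arguments Zstr : clear implicits.

Definition Zstr_open (Z : topologicalType) (n d : nat) (U : set (set Z)) : Prop :=
  exists W, @Zbr_open Z n W /\ U = W `&` Zstr Z d.

Definition Zstr_closed (Z : topologicalType) (n d : nat) (C : set (set Z)) : Prop :=
  C `<=` Zstr Z d /\ @Zstr_open Z n d (Zstr Z d `\` C).

Definition Zstr_normal (Z : topologicalType) (n d : nat) : Prop :=
  forall A B : set (set Z), @Zstr_closed Z n d A -> @Zstr_closed Z n d B ->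
    A `&` B = set0 ->
    exists U V, [/\ @Zstr_open Z n d U, @Zstr_open Z n d V, A `<=` U, B `<=` V &
                    U `&` V = set0].

(* Write d = k + 2 and fix an injective sequence phi in the uncountable
   discrete space X; put c_j := e (phi j) and w := e (infinity).  The sets
   F1 := e ({infinity} u range phi) and
   F2 := e ({infinity} u {phi j | j < k} u (X \ range phi)) are closed in Z and
   meet in only k + 1 points, so the d-element subsets of F1 and those of F2 form
   disjoint closed sets A, B of Z_(d).  Suppose U, V are disjoint open
   neighbourhoods of A and B.  For m >= k the point {w, c_m, c_0, ..., c_{k-1}}
   lies in A, and since w is the limit of e (x) along the cofinite filter of X,
   replacing w by e x keeps it in (the open set of Z_[n] defining) U for all x
   outside a finite set C_m.  Likewise, for y outside range phi the point
   {w, e y, c_0, ..., c_{k-1}} of B yields a finite set C'_y.  By uncountability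
   some y avoids range phi and every C_m, and some m >= k has phi m outside C'_y;
   then {e y, c_m, c_0, ..., c_{k-1}} lies in both U and V. *)

From HB Require Import structures.
From mathcomp Require Import all_boot all_order all_algebra.
From mathcomp Require Import all_classical all_reals all_analysis.
From mathcomp Require Import zify.
Set Implicit Arguments. Unset Strict Implicit. Unset Printing Implicit Defensive.
Local Open Scope classical_set_scope.
Local Open Scope card_scope.

(* [compact_cover] is stated for pointed spaces. *)
Definition pointed_at {X : topologicalType} (x0 : X) : Type := X.
HB.instance Definition _ (X : topologicalType) (x0 : X) :=
  Topological.on (pointed_at x0).
HB.instance Definition _ (X : topologicalType) (x0 : X) :=
  isPointed.Build (pointed_at x0) x0.

Lemma discrete_compact_finite (X : discreteTopologicalType) (C : set X) :
  compact C -> finite_set C.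
Proof.
move=> cC; have [->|/set0P [x0 Cx0]] := eqVneq C set0; first exact: finite_set0.
have : @cover_compact (pointed_at x0) C by rewrite -(@compact_cover (pointed_at x0)).
move=> /(_ X C (fun x => [set x])) [].
- by move=> i _; exact: (@discrete_open X).
- by move=> x Cx; exists x.
move=> D _ CD; apply: (sub_finite_set _ (finite_fset D)).
by move=> x /CD [i /= iD ->].
Qed.

Lemma nbhs_None_cofinite (X : discreteTopologicalType)
    (P : set (one_point_compactification X)) :
  nbhs (None : one_point_compactification X) P ->
  exists2 C : set X, finite_set C & forall x, ~ C x -> P (Some x).
Proof.
case=> C [cC _] sub; exists C; first exact: discrete_compact_finite.
by move=> x nCx; apply: sub; left; exists x.
Qed.

Lemma one_point_closed_None (X : discreteTopologicalType)
    (K : set (one_point_compactification X)) :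
  K None -> closed K.
Proof.
move=> KN; rewrite -openC.
have -> : ~` K = Some @` [set x | ~ K (Some x)].
  apply/seteqP; split; last by move=> _ [x nK <-].
  by case=> [x|] /= nK; [exists x | case: nK].
exact/one_point_compactification_open_some/discrete_open.
Qed.

Lemma closed_image_one_point (X : discreteTopologicalType) (Z : topologicalType)
    (e : one_point_compactification X -> Z) (K : set (one_point_compactification X)) :
  hausdorff_space Z -> continuous e -> K None -> closed (e @` K).
Proof.
move=> hZ ce KN; apply: compact_closed => //.
apply/continuous_compact; first exact: continuous_subspaceT.
apply: (subclosed_compact _ (@one_point_compactification_compact X)) => //.
exact: one_point_closed_None.
Qed.

Lemma choice_cofinite (I T : Type) (P : I -> Prop) (Q : I -> T -> Prop) :
  (forall i, P i -> exists2 C : set T, finite_set C & forall x, ~ C x -> Q i x) ->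
  exists2 C : I -> set T,
    (forall i, finite_set (C i)) & forall i, P i -> forall x, ~ C i x -> Q i x.
Proof.
move=> hPQ.
have /choice [C hC] : forall i, exists C : set T,
    finite_set C /\ (P i -> forall x, ~ C x -> Q i x).
  move=> i; have [/hPQ [C fC CQ]|nPi] := pselect (P i); first by exists C.
  by exists set0.
by exists C => i; have [] := hC i.
Qed.

Lemma uncountable_notin_bigcup_finite (T : Type) (C : nat -> set T) :
  ~ countable [set: T] -> (forall m, finite_set (C m)) ->
  exists y, forall m, ~ C m y.
Proof.
move=> Tunc Cfin; apply: contrapT => hC; apply: Tunc.
have sub : [set: T] `<=` \bigcup_m C m.
  move=> y _; apply: contrapT => nCy; apply: hC; exists y => m Cmy.
  by apply: nCy; exists m.
apply: sub_countable (subset_card_le sub) _.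
by apply: bigcup_countable => // m _; exact: finite_set_countable.
Qed.

Lemma injective_notin_finite (T : Type) (phi : nat -> T) (C : set T) (k : nat) :
  injective phi -> finite_set C -> exists2 m, (k <= m)%N & ~ C (phi m).
Proof.
move=> phi_inj fC; apply: contrapT => hC; apply: infinite_nat.
have fin : finite_set (`I_k `|` phi @^-1` C).
  rewrite finite_setU; split; first exact: finite_II.
  by apply: finite_preimage => // a b _ _; exact: phi_inj.
apply: sub_finite_set fin => m _; have [mk|km] := ltnP m k; first by left.
by right; apply: contrapT => nCm; apply: hC; exists m.
Qed.

Lemma uncountable_injective_nat (X : Type) :
  ~ countable [set: X] -> exists phi : nat -> X, injective phi.
Proof.
move=> Xunc; have Xinf : infinite_set [set: X] by move/finite_set_countable.
have /card_leP/unsquash phi := iffLR (infiniteP _) Xinf.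
exists (fun j => set_val (phi (to_setT j))) => a b /val_inj.
by move/(@inj _ _ _ phi); rewrite !in_setE => /(_ I I) /(congr1 set_val).
Qed.

Definition prepend2 {Z : Type} (c : nat -> Z) (u v : Z) (j : nat) : Z :=
  match j with 0 => u | 1 => v | j'.+2 => c j' end.

Lemma prepend2_swap (Z : Type) (c : nat -> Z) u v d : (1 < d)%N ->
  prepend2 c u v @` `I_d = prepend2 c v u @` `I_d.
Proof.
move=> d1; wlog suff : u v / prepend2 c u v @` `I_d `<=` prepend2 c v u @` `I_d.
  by move=> H; apply/seteqP; split; apply: H.
move=> _ [[|[|j]] /= jd <-]; [by exists 1%N | by exists 0%N => //=; lia | by exists j.+2].
Qed.

Lemma prepend2_card (Z : Type) (c : nat -> Z) u v k :
  u <> v -> (forall j, (j < k)%N -> u <> c j) -> (forall j, (j < k)%N -> v <> c j) ->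
  (forall i j, (i < k)%N -> (j < k)%N -> c i = c j -> i = j) ->
  prepend2 c u v @` `I_k.+2 #= `I_k.+2.
Proof.
move=> uv uc vc c_inj; apply: inj_card_eq => a b; rewrite !in_setE /=.
case: a => [|[|a]]; case: b => [|[|b]] //= ha hb H; first [
  by case: (uv H) | by case: (uv (esym H)) |
  by case: (uc b ltac:(lia) H) | by case: (vc b ltac:(lia) H) |
  by case: (uc a ltac:(lia) (esym H)) | by case: (vc a ltac:(lia) (esym H)) |
  by rewrite (c_inj a b ltac:(lia) ltac:(lia) H) ].
Qed.

Definition pad_tuple {Z : Type} (n d : nat) (g : nat -> Z) (i : 'I_n) : Z :=
  g (if (i < d)%N then val i else 1%N).
Arguments pad_tuple {Z} n d g i.

Lemma range_pad_tuple (Z : Type) n d (g : nat -> Z) : (1 < d)%N -> (d <= n)%N ->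
  range (pad_tuple n d g) = g @` `I_d.
Proof.
move=> d1 dn; apply/seteqP; split.
  by move=> _ [i _ <-]; rewrite /pad_tuple; case: ifP => id; [exists (val i) | exists 1%N].
move=> _ [j jd <-]; have jn : (j < n)%N by move: jd => /=; lia.
by exists (Ordinal jn) => //; rewrite /pad_tuple /= (_ : (j < d)%N = true).
Qed.

Lemma dfwith_pad_prepend2 (Z : Type) n d (c : nat -> Z) (u v z : Z) (i0 : 'I_n) :
  val i0 = 0%N -> (0 < d)%N ->
  @dfwith 'I_n (fun _ => Z) (pad_tuple n d (prepend2 c u v)) i0 z =
  pad_tuple n d (prepend2 c z v).
Proof.
move=> i00 d0; apply: functional_extensionality_dep => j.
have [<-|ne] := eqVneq i0 j.
  by rewrite dfwithin /pad_tuple -[nat_of_ord i0]/(val i0) i00 d0.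
rewrite dfwithout // /pad_tuple; case: ifP => // _.
have : val j != 0%N by apply: contra ne => /eqP j0; apply/eqP/val_inj; rewrite /= i00 j0.
by case: (val j) => [|[|j']].
Qed.

Lemma Zbr_range (Z : Type) n (f : 'I_n -> Z) : (0 < n)%N -> Zbr Z n (range f).
Proof.
move=> n0; split; first by exists (f (Ordinal n0)), (Ordinal n0).
apply: card_le_trans (card_image_le f setT) _.
by move/card_eqPle: (card_esym (@card_II n)) => [].
Qed.

Lemma Zstr_Zbr (Z : Type) n d S : (0 < d)%N -> (d <= n)%N -> Zstr Z d S -> Zbr Z n S.
Proof.
move=> d0 dn /card_eqPle [Sd dS]; split; last first.
  by apply: card_le_trans Sd _; rewrite card_le_II.
apply/set0P/negP => /eqP S0; move: dS; rewrite S0 => /card_le0P.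
by move/seteqP => [/(_ 0%N) /= H _]; exact: H.
Qed.

Lemma Zstr_closed_subset (Z : topologicalType) n d (F : set Z) :
  (0 < d)%N -> (d <= n)%N -> closed F ->
  Zstr_closed n d [set S | Zstr Z d S /\ S `<=` F].
Proof.
move=> d0 dn cF; split; first by move=> S [].
exists [set S | Zbr Z n S /\ ~ (S `<=` F)]; split; last first.
  apply/seteqP; split; last by move=> S [[_ nSF] ZS]; split => // -[_].
  by move=> S [ZS nSF]; split=> //; split=> [|SF]; [exact: Zstr_Zbr d0 dn ZS | exact: nSF].
split; first by move=> S [].
have -> : @symq Z n @^-1` [set S | Zbr Z n S /\ ~ (S `<=` F)] =
    \bigcup_i (@proj 'I_n (fun _ => Z) i) @^-1` (~` F).
  apply/seteqP; split.
    move=> f [_ nfF] /=; apply: contrapT => hf; apply: nfF => _ [i _ <-].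
    by apply: contrapT => nFi; apply: hf; exists i.
  move=> f [i _ nFi]; split; first by apply: Zbr_range; lia.
  by move=> fF; apply: nFi; apply: fF; exists i.
apply: bigcup_open => i _; apply: open_comp; last exact: closed_openC.
by move=> f _; exact: proj_continuous.
Qed.

Lemma open_Zbr_prepend2 (Z : topologicalType) n d (c : nat -> Z) (v : Z) W :
  (1 < d)%N -> (d <= n)%N -> Zbr_open n W ->
  open [set z | W (prepend2 c z v @` `I_d)].
Proof.
move=> d1 dn [_ oW]; have n0 : (0 < n)%N by lia.
pose i0 : 'I_n := Ordinal n0.
have -> : [set z | W (prepend2 c z v @` `I_d)] =
    @dfwith 'I_n (fun _ => Z) (pad_tuple n d (prepend2 c v v)) i0 @^-1`
      (@symq Z n @^-1` W).
  by apply/seteqP; split => z; rewrite /= /symq dfwith_pad_prepend2 ?range_pad_tuple //; lia.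
by apply: (@open_comp Z {ptws 'I_n -> Z}) => // z _; exact: dfwith_continuous.
Qed.

Section StratumNotNormal.
Variables (Z : topologicalType) (X : discreteTopologicalType).
Hypothesis Z_hausdorff : hausdorff_space Z.
Variable e : one_point_compactification X -> Z.
Hypotheses (e_inj : injective e) (e_cont : continuous e).
Variables n k : nat.
Hypothesis k2n : (k.+2 <= n)%N.
Variable phi : nat -> X.
Hypothesis phi_inj : injective phi.

Let c j := e (Some (phi j)).
Let S u v := prepend2 c u v @` `I_k.+2.

Let F1 := e @` [set p | p = None \/ exists j, p = Some (phi j)].
Let F2 := e @` [set p | [\/ p = None, exists2 j, (j < k)%N & p = Some (phi j)
                           | exists2 y, ~ range phi y & p = Some y]].
Let A := [set T | Zstr Z k.+2 T /\ T `<=` F1].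
Let B := [set T | Zstr Z k.+2 T /\ T `<=` F2].

Lemma Zbr_open_cofinite W v : Zbr_open n W -> W (S (e None) v) ->
  exists2 C : set X, finite_set C & forall x, ~ C x -> W (S (e (Some x)) v).
Proof.
move=> oW WS; apply: (@nbhs_None_cofinite X (fun p => W (S (e p) v))).
have oO : open [set z | W (S z v)] by apply: open_Zbr_prepend2 oW.
exact: (@e_cont None _ (open_nbhs_nbhs (conj oO WS))).
Qed.

Lemma Zstr_S p q : p <> q ->
  (forall j, (j < k)%N -> p <> Some (phi j)) ->
  (forall j, (j < k)%N -> q <> Some (phi j)) -> Zstr Z k.+2 (S (e p) (e q)).
Proof.
move=> pq pc qc; apply: prepend2_card.
- by move=> /e_inj.
- by move=> j jk /e_inj; exact: pc.
- by move=> j jk /e_inj; exact: qc.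
- by move=> i j _ _ /e_inj [] /phi_inj.
Qed.

Lemma closed_A : Zstr_closed n k.+2 A.
Proof. by apply: Zstr_closed_subset => //; apply: closed_image_one_point => //; left. Qed.

Lemma closed_B : Zstr_closed n k.+2 B.
Proof. by apply: Zstr_closed_subset => //; apply: closed_image_one_point => //; exact: Or31. Qed.

Lemma S_None_in_A m : (k <= m)%N -> A (S (e None) (c m)).
Proof.
move=> km; split.
  by apply: Zstr_S => // j jk [/phi_inj]; lia.
move=> _ [[|[|j]] _ <-] /=; [exists None | exists (Some (phi m)) | exists (Some (phi j))];
  by [| left | right; eexists].
Qed.

Lemma S_None_in_B y : ~ range phi y -> B (S (e None) (e (Some y))).
Proof.
move=> ny; split; first by apply: Zstr_S => // j _ [yj]; apply: ny; exists j.
move=> _ [[|[|j]] jk <-] /=; [exists None | exists (Some y) | exists (Some (phi j))] => //.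
- exact: Or31.
- by apply: Or33; exists y.
- by apply: Or32; exists j => //; move: jk => /=; lia.
Qed.

Lemma disjoint_A_B : A `&` B = set0.
Proof.
apply/seteqP; split => // T [[ZT T1] [_ T2]].
pose h j := if j is j'.+1 then c j' else e None.
have Th : T `<=` h @` `I_k.+1.
  move=> z Tz; have [p K1p ep] := T1 z Tz; have [q K2q eq] := T2 z Tz.
  have pq : p = q by apply: e_inj; rewrite ep eq.
  subst q.
  case: K1p ep K2q => [->|[j ->]] ep; first by exists 0%N.
  case=> [//|[j' j'k [/phi_inj jj']]|[y ny [yj]]]; first by exists j'.+1; rewrite //= -ep jj'.
  by case: ny; exists j.
have : `I_k.+2 #<= `I_k.+1.
  have [_ IT] := iffLR (card_eqPle _ _) ZT.
  apply: card_le_trans IT _; apply: card_le_trans (subset_card_le Th) _.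
  exact: card_image_le.
by rewrite card_le_II ltnn.
Qed.

Theorem Zstr_not_normal : ~ countable [set: X] -> ~ @Zstr_normal Z n k.+2.
Proof.
move=> Xunc normal.
have [U [V [[WU [WUo ->]] [WV [WVo ->]] AU BV UV0]]] :=
  normal A B closed_A closed_B disjoint_A_B.
have [CU CUfin CU_WU] := choice_cofinite (fun m (km : (k <= m)%N) =>
  Zbr_open_cofinite WUo (AU _ (S_None_in_A km)).1).
have [CV CVfin CV_WV] := choice_cofinite (fun y (ny : ~ range phi y) =>
  Zbr_open_cofinite WVo (BV _ (S_None_in_B ny)).1).
have [y hy] : exists y, forall m, ~ ([set phi m] `|` CU m) y.
  by apply: uncountable_notin_bigcup_finite => // m; rewrite finite_setU; split.
have ny : ~ range phi y by move=> [m _ phim]; apply: (hy m); left.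
have [m km nm] := injective_notin_finite k phi_inj (CVfin y).
have WUS : WU (S (e (Some y)) (c m)) by apply: CU_WU => // Cy; apply: (hy m); right.
have WVS : WV (S (e (Some y)) (c m)) by rewrite /S prepend2_swap //; exact: CV_WV.
have ZS : Zstr Z k.+2 (S (e (Some y)) (c m)).
  apply: Zstr_S => [[ym]|j _ [yj]|j jk [/phi_inj]]; last lia.
    by apply: ny; exists m.
  by apply: ny; exists j.
suff : (WU `&` Zstr Z k.+2 `&` (WV `&` Zstr Z k.+2)) (S (e (Some y)) (c m)) by rewrite UV0.
by [].
Qed.

End StratumNotNormal.

Theorem mainTheorem3 (Z : topologicalType)
  (hZc : compact [set: Z]) (hZh : hausdorff_space Z)
  (X : discreteTopologicalType) (hXu : ~ countable [set: X])
  (e : one_point_compactification X -> Z) (he : embedding e)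
  (n : nat) (hn : (0 < n)%N) :
  forall d : nat, (2 <= d <= n)%N -> ~ @Zstr_normal Z n d.
Proof.
move=> [|[|k]] // /andP [_ kn].
have [phi phi_inj] := uncountable_injective_nat hXu.
have [e_inj e_cont _] := he.
exact: (Zstr_not_normal hZh e_inj e_cont kn phi_inj hXu).
Qed.
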